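(* Let $\nu_1,\dots,\nu_p>0$ and let $\eta_1,\dots,\eta_p$ be independent random variables with $\eta_j\sim\mathcal P(\nu_j)$ (Poisson with mean $\nu_j$). Set $\boldsymbol\eta=(\eta_1,\dots,\eta_p)$, $\boldsymbol\nu=(\nu_1,\dots,\nu_p)$ and $\nu_\infty=\max_j\nu_j$. Then for every $u$ satisfying $\nu_\infty^{-3/2}\le u\le 0.9\,\nu_\infty^{3/2}$, $$\mathbf P\Big(\|\boldsymbol\eta-\boldsymbol\nu\|_2^2-\|\boldsymbol\eta\|_1\ge \nu_\infty\sqrt p\,u\Big)\le(2p+1)e^{-cu^{2/3}},$$ where $c\ge 0.38$ is a universal constant (one may take $c=12^{1/3}/6$).
   Context: $\|\cdot\|_2$ and $\|\cdot\|_1$ are the Euclidean and $\ell_1$ norms on $\mathbb R^p$. *)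

From Stdlib Require Import Reals List Arith Factorial.
Import ListNotations.
Open Scope R_scope.

Definition sumR (l : list R) : R := fold_right Rplus 0 l.
Definition prodR (l : list R) : R := fold_right Rmult 1 l.

Definition poisson_pmf (nu : R) (k : nat) : R := exp (- nu) * nu ^ k / INR (Factorial.fact k).

(* An outcome of eta = (eta_0,...,eta_{p-1}) is a list k of naturals of length p;
   eta_j = nth j k 0.  nu : nat -> R gives nu_j for j < p. *)

Definition joint_pmf (p : nat) (nu : nat -> R) (k : list nat) : R :=
  prodR (map (fun j => poisson_pmf (nu j) (nth j k 0%nat)) (seq 0 p)).

Fixpoint box (p N : nat) : list (list nat) :=
  match p with
  | O => [[]]
  | S p' => flat_map (fun a => map (cons a) (box p' N)) (seq 0 (S N))
  end.

(* P(eta in E) <= b, where P(eta in E) = sum over k in N^p with E k of joint_pmf k.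
   Since all terms are nonnegative, this (countable) sum is <= b iff every
   finite partial sum over a box {0..N}^p is <= b. *)
Definition prob_le (p : nat) (nu : nat -> R) (E : list nat -> Prop)
  (decE : forall k, {E k} + {~ E k}) (b : R) : Prop :=
  forall N : nat,
    sumR (map (fun k => if decE k then joint_pmf p nu k else 0) (box p N)) <= b.

Definition stat (p : nat) (nu : nat -> R) (k : list nat) : R :=
  sumR (map (fun j => (INR (nth j k 0%nat) - nu j) ^ 2) (seq 0 p))
  - sumR (map (fun j => INR (nth j k 0%nat)) (seq 0 p)).

(* nu_infty = max_j nu_j (for p >= 1 and nu_j > 0) *)
Definition nu_inf (p : nat) (nu : nat -> R) : R :=
  fold_right Rmax 0 (map nu (seq 0 p)).

Definition stat_ge_dec (p : nat) (nu : nat -> R) (t : R) (k : list nat)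
  : {t <= stat p nu k} + {~ t <= stat p nu k} := Rle_dec t (stat p nu k).

(* Write X_j = (eta_j - nu_j)^2 - eta_j, so that the statistic is sum_j X_j, and put
   u = w^3, r = sqrt nu_inf: the threshold is nu_inf sqrt(p) w^3 and the bound exp(-c w^2).
   - If c w^2 < 1.06 the bound exceeds 1.
   - If sqrt p <= 9/16 w, the event forces some |eta_j - nu_j| >= 4/3 w r; a union bound
     with Chernoff bounds for the Poisson tails gives 2p exp(-c w^2).
   - Otherwise split off the event that some |eta_j - nu_j| >= A = 21/20 w r (Chernoff
     again) and apply exponential Markov to the rest: since lam X_j <= 1.6 there and
     e^y <= 1 + y + 2.49 y^2 for y <= 1.6, while E[X_j 1{|eta_j - nu_j| < A}] <= 0 and
     E[X_j^2] = 2 nu_j^2 by Stein's identity, each factor is at most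
     exp(2 * 2.49 lam^2 nu_inf^2); the optimal lam (capped by lam A^2 <= 1.6) then yields
     exp(-c w^2). *)

From Stdlib Require Import Reals List Lra Lia Psatz Arith Factorial.
From Coquelicot Require Import Coquelicot.
Import ListNotations.
Open Scope R_scope.

Lemma sumR_app l1 l2 : sumR (l1 ++ l2) = sumR l1 + sumR l2.
Proof. induction l1; simpl; [lra | rewrite IHl1; lra]. Qed.

Lemma sumR_map_add {A} (f g : A -> R) l :
  sumR (map (fun x => f x + g x) l) = sumR (map f l) + sumR (map g l).
Proof. induction l; simpl; [lra | rewrite IHl; lra]. Qed.

Lemma sumR_map_sub {A} (f g : A -> R) l :
  sumR (map (fun x => f x - g x) l) = sumR (map f l) - sumR (map g l).
Proof. induction l; simpl; [lra | rewrite IHl; lra]. Qed.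

Lemma sumR_map_scal {A} (c : R) (f : A -> R) l :
  sumR (map (fun x => c * f x) l) = c * sumR (map f l).
Proof. induction l; simpl; [lra | rewrite IHl; lra]. Qed.

Lemma sumR_map_const {A} (a : R) (l : list A) :
  sumR (map (fun _ => a) l) = INR (length l) * a.
Proof. induction l; simpl length; [simpl; lra | rewrite S_INR; simpl; rewrite IHl; lra]. Qed.

Lemma sumR_map_ext {A} (f g : A -> R) l :
  (forall x, In x l -> f x = g x) -> sumR (map f l) = sumR (map g l).
Proof. intros H; f_equal; apply map_ext_in; auto. Qed.

Lemma sumR_map_le {A} (f g : A -> R) l :
  (forall x, In x l -> f x <= g x) -> sumR (map f l) <= sumR (map g l).
Proof.
  induction l as [|a l IH]; simpl; intros H; [lra|].
  assert (f a <= g a) by auto. assert (sumR (map f l) <= sumR (map g l)) by auto. lra.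
Qed.

Lemma sumR_map_nonneg {A} (f : A -> R) l :
  (forall x, In x l -> 0 <= f x) -> 0 <= sumR (map f l).
Proof.
  intros H. rewrite <- (Rmult_0_r (INR (length l))), <- sumR_map_const.
  apply sumR_map_le; auto.
Qed.

Lemma sumR_map_elem_le {A} (f : A -> R) l x :
  (forall y, In y l -> 0 <= f y) -> In x l -> f x <= sumR (map f l).
Proof.
  induction l as [|a l IH]; simpl; intros H Hx; [contradiction|].
  assert (0 <= f a) by auto.
  assert (0 <= sumR (map f l)) by (apply sumR_map_nonneg; auto).
  destruct Hx as [<-|Hx]; [lra|]. assert (f x <= sumR (map f l)) by auto. lra.
Qed.

Lemma sumR_map_lt_const {A} (f : A -> R) (a : R) l : l <> [] ->
  (forall x, In x l -> f x < a) -> sumR (map f l) < INR (length l) * a.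
Proof.
  induction l as [|x l IH]; intros Hl H; [congruence|]. simpl length. rewrite S_INR. simpl.
  assert (f x < a) by (apply H; left; auto).
  destruct l as [|y l]; [simpl; lra|].
  assert (sumR (map f (y :: l)) < INR (length (y :: l)) * a)
    by (apply IH; [discriminate | intros; apply H; right; auto]).
  lra.
Qed.

Lemma sumR_flat_map {A B} (g : A -> list B) (f : B -> R) l :
  sumR (map f (flat_map g l)) = sumR (map (fun a => sumR (map f (g a))) l).
Proof. induction l; simpl; [lra|]. rewrite map_app, sumR_app, IHl. lra. Qed.

Lemma prodR_map_mult {A} (f g : A -> R) l :
  prodR (map (fun x => f x * g x) l) = prodR (map f l) * prodR (map g l).
Proof. induction l; simpl; [lra | rewrite IHl; lra]. Qed.

Lemma prodR_map_const {A} (a : R) (l : list A) : prodR (map (fun _ => a) l) = a ^ length l.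
Proof. induction l; simpl; [reflexivity | rewrite IHl; reflexivity]. Qed.

Lemma prodR_map_nonneg {A} (f : A -> R) l :
  (forall x, In x l -> 0 <= f x) -> 0 <= prodR (map f l).
Proof.
  induction l as [|a l IH]; simpl; intros H; [lra|].
  assert (0 <= f a) by auto. assert (0 <= prodR (map f l)) by auto. nra.
Qed.

Lemma prodR_map_le {A} (f g : A -> R) l :
  (forall x, In x l -> 0 <= f x <= g x) -> prodR (map f l) <= prodR (map g l).
Proof.
  induction l as [|a l IH]; simpl; intros H; [lra|].
  assert (0 <= f a <= g a) by auto.
  assert (prodR (map f l) <= prodR (map g l)) by auto.
  assert (0 <= prodR (map f l)) by (apply prodR_map_nonneg; intros; apply H; auto).
  nra.
Qed.

Lemma prodR_map_indicator_off (j0 : nat) (a : R) n m : (j0 < m \/ m + n <= j0)%nat ->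
  prodR (map (fun j => if Nat.eqb j j0 then a else 1) (seq m n)) = 1.
Proof.
  revert m. induction n as [|n IH]; intros m Hm; simpl; [reflexivity|]. fold prodR.
  destruct (Nat.eqb_spec m j0); [lia|]. rewrite IH by lia. ring.
Qed.

Lemma prodR_map_indicator_on (j0 : nat) (a : R) n m : (m <= j0 < m + n)%nat ->
  prodR (map (fun j => if Nat.eqb j j0 then a else 1) (seq m n)) = a.
Proof.
  revert m. induction n as [|n IH]; intros m Hm; [lia|]. simpl. fold prodR.
  destruct (Nat.eqb_spec m j0) as [->|].
  - rewrite prodR_map_indicator_off by lia. ring.
  - rewrite IH by lia. ring.
Qed.

Lemma exp_sumR_map {A} (h : A -> R) l : exp (sumR (map h l)) = prodR (map (fun j => exp (h j)) l).
Proof. induction l; simpl; [apply exp_0 | rewrite exp_plus, IHl; reflexivity]. Qed.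

Lemma sumR_box_prod p N (F : nat -> nat -> R) :
  sumR (map (fun k => prodR (map (fun j => F j (nth j k 0%nat)) (seq 0 p))) (box p N))
  = prodR (map (fun j => sumR (map (F j) (seq 0 (S N)))) (seq 0 p)).
Proof.
  revert F. induction p as [|p IH]; intros F; [simpl; lra|].
  change (box (S p) N) with (flat_map (fun a => map (cons a) (box p N)) (seq 0 (S N))).
  rewrite sumR_flat_map.
  replace (seq 0 (S p)) with (0%nat :: map S (seq 0 p)) by (simpl; rewrite seq_shift; reflexivity).
  set (K := prodR (map (fun j => sumR (map (F (S j)) (seq 0 (S N)))) (seq 0 p))).
  transitivity (sumR (map (fun a => K * F 0%nat a) (seq 0 (S N)))).
  - apply sumR_map_ext. intros a _. rewrite map_map, Rmult_comm.
    unfold K. rewrite <- (IH (fun j => F (S j))), <- sumR_map_scal.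
    apply sumR_map_ext. intros k _. cbn. rewrite !map_map. reflexivity.
  - rewrite sumR_map_scal. cbn [map]. rewrite map_map. unfold K, prodR. simpl. ring.
Qed.

Lemma exp_le x y : x <= y -> exp x <= exp y.
Proof. intros [H| ->]; [left; apply exp_increasing; auto | lra]. Qed.

Lemma exp_INR_mult (t : R) (m : nat) : exp (t * INR m) = exp t ^ m.
Proof.
  induction m as [|m IH]; [simpl; rewrite Rmult_0_r; apply exp_0|].
  rewrite S_INR, Rmult_plus_distr_l, exp_plus, IH, Rmult_1_r. simpl. ring.
Qed.

Lemma Derive_n_exp n x : Derive_n exp n x = exp x.
Proof.
  revert x. induction n as [|n IH]; intros x; [reflexivity|]. simpl.
  rewrite (Derive_ext _ exp _ IH). apply is_derive_unique, is_derive_exp.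
Qed.

Lemma exp_taylor_lagrange n x : 0 < x -> exists z, 0 < z < x /\
  exp x = sum_f_R0 (fun m => x ^ m / INR (fact m)) n + x ^ S n / INR (fact (S n)) * exp z.
Proof.
  intros Hx. destruct (Taylor_Lagrange exp n 0 x Hx) as [z [Hz E]].
  { intros t _ k _. destruct k; simpl; [exact I|].
    apply (ex_derive_ext exp); [intros; symmetry; apply Derive_n_exp|].
    eexists. apply is_derive_exp. }
  exists z. split; auto. rewrite E, Derive_n_exp. f_equal.
  - apply sum_eq. intros i _. rewrite Derive_n_exp, exp_0, Rminus_0_r. ring.
  - rewrite Rminus_0_r. reflexivity.
Qed.

Lemma exp_le_quintic x : 0 <= x <= 1 ->
  exp x <= 1 + x + x ^ 2 / 2 + x ^ 3 / 6 + x ^ 4 / 24 + x ^ 5 / 40.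
Proof.
  intros [[Hx| <-] H1]; [|rewrite exp_0; simpl; lra].
  destruct (exp_taylor_lagrange 4 x Hx) as [z [Hz ->]].
  assert (exp z <= 3) by (apply (Rle_trans _ (exp 1)); [apply exp_le; lra | apply exp_le_3]).
  assert (0 < exp z) by apply exp_pos.
  assert (0 <= x ^ 5) by (apply pow_le; lra).
  simpl sum_f_R0. simpl fact. simpl INR. simpl pow in *. nra.
Qed.

Lemma exp_le_quad_exp y : 0 <= y -> exp y <= 1 + y + y ^ 2 / 2 * exp y.
Proof.
  intros [Hy| <-]; [|rewrite exp_0; simpl; lra].
  destruct (exp_taylor_lagrange 1 y Hy) as [z [Hz E]]. rewrite E at 1.
  assert (exp z <= exp y) by (apply exp_le; lra).
  simpl. nra.
Qed.

Lemma exp_neg_le_quad t : 0 <= t -> exp (- t) <= 1 - t + t ^ 2 / 2.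
Proof.
  intros Ht. rewrite exp_Ropp.
  assert (1 + t + t ^ 2 / 2 <= exp t) by (generalize (exp_ge_taylor t 2 Ht); simpl; lra).
  apply (Rmult_le_reg_l (exp t)); [apply exp_pos|].
  rewrite Rinv_r by (apply Rgt_not_eq, exp_pos).
  assert (1 <= (1 + t + t ^ 2 / 2) * (1 - t + t ^ 2 / 2)) by nra.
  nra.
Qed.

Lemma exp_1_6_le : exp (16/10) <= 498/100.
Proof.
  replace (16/10) with (8/10 + 8/10) by lra. rewrite exp_plus.
  generalize (exp_le_quintic (8/10) ltac:(lra)) (exp_pos (8/10)). simpl. nra.
Qed.

Lemma exp_1_06_le : exp (106/100) <= 3.
Proof.
  replace (106/100) with (53/100 + 53/100) by lra. rewrite exp_plus.
  generalize (exp_le_quintic (53/100) ltac:(lra)) (exp_pos (53/100)). simpl. nra.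
Qed.

Lemma exp_le_quadratic y : y <= 16/10 -> exp y <= 1 + y + 249/100 * y ^ 2.
Proof.
  intros Hy. destruct (Rle_dec 0 y).
  - assert (exp y <= 498/100) by (apply (Rle_trans _ _ _ (exp_le _ _ Hy)), exp_1_6_le).
    generalize (exp_le_quad_exp y r) (pow2_ge_0 y). nra.
  - replace y with (- (- y)) by ring.
    generalize (exp_neg_le_quad (- y) ltac:(lra)). simpl. nra.
Qed.

Lemma poisson_pmf_nonneg nu m : 0 <= nu -> 0 <= poisson_pmf nu m.
Proof.
  intros H. unfold poisson_pmf.
  apply Rmult_le_pos; [apply Rmult_le_pos; [left; apply exp_pos | apply pow_le; auto]|].
  left. apply Rinv_0_lt_compat, lt_0_INR, lt_O_fact.
Qed.

Lemma poisson_pmf_S nu m : poisson_pmf nu (S m) = poisson_pmf nu m * nu / INR (S m).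
Proof.
  unfold poisson_pmf. rewrite fact_simpl, mult_INR.
  assert (0 < INR (fact m)) by apply lt_0_INR, lt_O_fact.
  assert (0 < INR (S m)) by (apply lt_0_INR; lia).
  simpl pow. field. lra.
Qed.

Definition trunc_expect (f : nat -> R) (nu : R) (N : nat) : R :=
  sumR (map (fun m => f m * poisson_pmf nu m) (seq 0 (S N))).

Lemma trunc_expect_0 f nu : trunc_expect f nu 0 = f 0%nat * poisson_pmf nu 0.
Proof. unfold trunc_expect. simpl. ring. Qed.

Lemma trunc_expect_S f nu N :
  trunc_expect f nu (S N) = trunc_expect f nu N + f (S N) * poisson_pmf nu (S N).
Proof. unfold trunc_expect. rewrite (seq_S (S N)), map_app, sumR_app. simpl. ring. Qed.

Lemma sumR_map_seq_sum_f_R0 (f : nat -> R) N : sumR (map f (seq 0 (S N))) = sum_f_R0 f N.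
Proof.
  induction N as [|N IH]; [simpl; lra|].
  rewrite (seq_S (S N)), map_app, sumR_app, IH. simpl. ring.
Qed.

Section TruncExpect.
Variable nu : R.
Hypothesis nu_ge0 : 0 <= nu.

Lemma trunc_expect_le f g N : (forall m, f m <= g m) -> trunc_expect f nu N <= trunc_expect g nu N.
Proof.
  intros H. apply sumR_map_le. intros m _.
  apply Rmult_le_compat_r; [apply poisson_pmf_nonneg |]; auto.
Qed.

Lemma trunc_expect_nonneg f N : (forall m, 0 <= f m) -> 0 <= trunc_expect f nu N.
Proof.
  intros H. apply sumR_map_nonneg. intros m _.
  apply Rmult_le_pos; [| apply poisson_pmf_nonneg]; auto.
Qed.

Lemma trunc_expect_scal c f N : trunc_expect (fun m => c * f m) nu N = c * trunc_expect f nu N.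
Proof. unfold trunc_expect. rewrite <- sumR_map_scal. apply sumR_map_ext; intros; ring. Qed.

Lemma trunc_expect_add f g N :
  trunc_expect (fun m => f m + g m) nu N = trunc_expect f nu N + trunc_expect g nu N.
Proof. unfold trunc_expect. rewrite <- sumR_map_add. apply sumR_map_ext; intros; ring. Qed.

Lemma trunc_expect_mono f N N' : (forall m, 0 <= f m) -> (N <= N')%nat ->
  trunc_expect f nu N <= trunc_expect f nu N'.
Proof.
  intros Hf HN. induction HN as [|N' _ IH]; [lra|]. rewrite trunc_expect_S.
  generalize (Hf (S N')) (poisson_pmf_nonneg nu (S N') nu_ge0). nra.
Qed.

Lemma trunc_expect_exp_le a N :
  trunc_expect (fun m => exp (a * INR m)) nu N <= exp (nu * (exp a - 1)).
Proof.
  transitivity (exp (- nu) * sum_f_R0 (fun m => (nu * exp a) ^ m / INR (fact m)) N).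
  - right. rewrite <- sumR_map_seq_sum_f_R0, <- sumR_map_scal. apply sumR_map_ext. intros m _.
    rewrite exp_INR_mult. unfold poisson_pmf. rewrite Rpow_mult_distr. unfold Rdiv. ring.
  - replace (nu * (exp a - 1)) with (- nu + nu * exp a) by ring. rewrite exp_plus.
    apply Rmult_le_compat_l; [left; apply exp_pos|].
    apply exp_ge_taylor, Rmult_le_pos; [| left; apply exp_pos]; auto.
Qed.

Lemma trunc_expect_one_le N : trunc_expect (fun _ => 1) nu N <= 1.
Proof.
  transitivity (trunc_expect (fun m => exp (0 * INR m)) nu N).
  - apply trunc_expect_le. intros m. rewrite Rmult_0_l, exp_0. lra.
  - eapply Rle_trans; [apply trunc_expect_exp_le|].
    rewrite exp_0, Rminus_diag, Rmult_0_r, exp_0. lra.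
Qed.

Lemma poisson_upper_tail N s th : 0 <= th ->
  trunc_expect (fun m => if Rle_dec s (INR m - nu) then 1 else 0) nu N
  <= exp (nu * (exp th - 1 - th) - th * s).
Proof.
  intros Hth.
  transitivity (trunc_expect (fun m => exp (- th * nu - th * s) * exp (th * INR m)) nu N).
  - apply trunc_expect_le. intros m. rewrite <- exp_plus.
    destruct (Rle_dec s (INR m - nu)); [rewrite <- exp_0 at 1; apply exp_le; nra |].
    left; apply exp_pos.
  - rewrite trunc_expect_scal.
    eapply Rle_trans; [apply Rmult_le_compat_l; [left; apply exp_pos | apply trunc_expect_exp_le]|].
    rewrite <- exp_plus. apply exp_le. nra.
Qed.

Lemma poisson_lower_tail N s th : 0 <= th ->
  trunc_expect (fun m => if Rle_dec (INR m - nu) (- s) then 1 else 0) nu N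
  <= exp (nu * (exp (- th) - 1 + th) - th * s).
Proof.
  intros Hth.
  transitivity (trunc_expect (fun m => exp (th * nu - th * s) * exp (- th * INR m)) nu N).
  - apply trunc_expect_le. intros m. rewrite <- exp_plus.
    destruct (Rle_dec (INR m - nu) (- s)); [rewrite <- exp_0 at 1; apply exp_le; nra |].
    left; apply exp_pos.
  - rewrite trunc_expect_scal.
    eapply Rle_trans; [apply Rmult_le_compat_l; [left; apply exp_pos | apply trunc_expect_exp_le]|].
    rewrite <- exp_plus. apply exp_le. nra.
Qed.

End TruncExpect.

Definition dev_indicator (nu s : R) (m : nat) : R :=
  (if Rle_dec s (INR m - nu) then 1 else 0) + (if Rle_dec (INR m - nu) (- s) then 1 else 0).

Lemma dev_indicator_nonneg nu s m : 0 <= dev_indicator nu s m.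
Proof. unfold dev_indicator. destruct Rle_dec; destruct Rle_dec; lra. Qed.

Lemma dev_indicator_lt_1 nu s m : dev_indicator nu s m < 1 -> Rabs (INR m - nu) < s.
Proof.
  unfold dev_indicator. intros H. destruct Rle_dec; destruct Rle_dec; try lra.
  apply Rabs_def1; lra.
Qed.

Lemma trunc_expect_dev_indicator_le nu V N s th E : 0 < nu <= V -> 0 <= th <= 1 ->
  V * (th ^ 2 / 2 + th ^ 3 / 6 + th ^ 4 / 24 + th ^ 5 / 40) - th * s <= E ->
  trunc_expect (dev_indicator nu s) nu N <= 2 * exp E.
Proof.
  intros Hnu Hth HE. unfold dev_indicator. rewrite trunc_expect_add.
  assert (Hup : nu * (exp th - 1 - th) - th * s <= E).
  { generalize (exp_le_quintic th Hth) (exp_ineq1_le th). nra. }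
  assert (Hlo : nu * (exp (- th) - 1 + th) - th * s <= E).
  { generalize (exp_neg_le_quad th (proj1 Hth)) (exp_ineq1_le (- th)).
    generalize (pow_le th 3) (pow_le th 4) (pow_le th 5). nra. }
  generalize (poisson_upper_tail nu ltac:(lra) N s th (proj1 Hth))
             (poisson_lower_tail nu ltac:(lra) N s th (proj1 Hth))
             (exp_le _ _ Hup) (exp_le _ _ Hlo).
  lra.
Qed.

Definition quad_dev (nu : R) (m : nat) : R := (INR m - nu) ^ 2 - INR m.

Definition in_window (nu A : R) (m : nat) : bool :=
  if Rlt_dec (Rabs (INR m - nu)) A then true else false.

Lemma quad_dev_lt nu A m : in_window nu A m = true -> quad_dev nu m < A ^ 2.
Proof.
  unfold in_window, quad_dev. destruct Rlt_dec as [H|]; [intros _ | discriminate].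
  apply Rabs_def2 in H. generalize (pos_INR m). simpl. nra.
Qed.

Section QuadDev.
Variable nu : R.
Hypothesis nu_gt0 : 0 < nu.

(* Stein's identity for the Poisson law: the summand [quad_dev nu m * poisson_pmf nu m]
   is the increment of [m |-> nu * poisson_pmf nu m * (nu - m)]. *)
Let drift (m : nat) : R := nu * poisson_pmf nu m * (nu - INR m).

Lemma quad_dev_pmf_S n : quad_dev nu (S n) * poisson_pmf nu (S n) = drift (S n) - drift n.
Proof.
  unfold drift, quad_dev. rewrite !poisson_pmf_S, S_INR.
  assert (0 < INR n + 1) by (generalize (pos_INR n); lra).
  field. lra.
Qed.

Lemma trunc_expect_quad_dev_on_le (good : nat -> bool) :
  (forall n, good n = true -> good (S n) = false -> drift n <= 0) ->
  (forall n, good n = false -> good (S n) = true -> 0 <= drift n) ->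
  forall N, trunc_expect (fun m => (if good m then 1 else 0) * quad_dev nu m) nu N
            <= if good N then drift N else 0.
Proof.
  intros Hexit Henter. induction N as [|N IH].
  - rewrite trunc_expect_0, Rmult_assoc.
    replace (quad_dev nu 0 * poisson_pmf nu 0) with (drift 0) by (unfold drift, quad_dev; simpl; ring).
    destruct (good 0%nat); lra.
  - rewrite trunc_expect_S, Rmult_assoc, quad_dev_pmf_S.
    destruct (good N) eqn:EN; destruct (good (S N)) eqn:ES.
    + lra.
    + specialize (Hexit N EN ES). lra.
    + specialize (Henter N EN ES). lra.
    + lra.
Qed.

Lemma trunc_expect_window_quad_dev_le A N : 1 <= A -> nu + A <= INR N ->
  trunc_expect (fun m => (if in_window nu A m then 1 else 0) * quad_dev nu m) nu N <= 0.
Proof.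
  intros HA HN.
  assert (Hdrift : forall n, 0 <= nu * poisson_pmf nu n)
    by (intros n; apply Rmult_le_pos; [lra | apply poisson_pmf_nonneg; lra]).
  eapply Rle_trans; [apply trunc_expect_quad_dev_on_le|].
  - intros n. unfold in_window. rewrite S_INR.
    destruct (Rlt_dec (Rabs (INR n - nu)) A) as [H1|H1];
      destruct (Rlt_dec (Rabs (INR n + 1 - nu)) A) as [H2|H2]; try discriminate. intros _ _.
    apply Rabs_def2 in H1.
    assert (nu <= INR n) by (destruct (Rcase_abs (INR n + 1 - nu)) as [h|h];
      [rewrite Rabs_left in H2 | rewrite Rabs_right in H2]; lra).
    generalize (Hdrift n). unfold drift. nra.
  - intros n. unfold in_window. rewrite S_INR.
    destruct (Rlt_dec (Rabs (INR n - nu)) A) as [H1|H1];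
      destruct (Rlt_dec (Rabs (INR n + 1 - nu)) A) as [H2|H2]; try discriminate. intros _ _.
    apply Rabs_def2 in H2.
    assert (INR n <= nu) by (destruct (Rcase_abs (INR n - nu)) as [h|h];
      [| rewrite Rabs_right in H1]; lra).
    generalize (Hdrift n). unfold drift. nra.
  - unfold in_window. destruct Rlt_dec as [H|]; [apply Rabs_def2 in H; lra | lra].
Qed.

Lemma trunc_expect_quad_dev_sq N : trunc_expect (fun m => quad_dev nu m ^ 2) nu N
  = 2 * nu ^ 2 * trunc_expect (fun _ => 1) nu N
    - nu * poisson_pmf nu N * ((INR N - nu) ^ 3 + INR N * (INR N - nu) + 2 * nu).
Proof.
  induction N as [|N IH].
  - rewrite !trunc_expect_0. unfold quad_dev. simpl. ring.
  - rewrite !trunc_expect_S, IH, !poisson_pmf_S. unfold quad_dev. rewrite S_INR.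
    assert (0 < INR N + 1) by (generalize (pos_INR N); lra).
    field. lra.
Qed.

Lemma trunc_expect_quad_dev_sq_le N : nu <= INR N ->
  trunc_expect (fun m => quad_dev nu m ^ 2) nu N <= 2 * nu ^ 2.
Proof.
  intros HN. rewrite trunc_expect_quad_dev_sq.
  assert (0 <= (INR N - nu) ^ 3 + INR N * (INR N - nu) + 2 * nu)
    by (generalize (pow_le (INR N - nu) 3 ltac:(lra)) (pos_INR N); nra).
  assert (0 <= nu * poisson_pmf nu N)
    by (apply Rmult_le_pos; [lra | apply poisson_pmf_nonneg; lra]).
  generalize (trunc_expect_one_le nu ltac:(lra) N) (pow2_ge_0 nu).
  nra.
Qed.

End QuadDev.

Definition window_exp (nu A lam : R) (m : nat) : R :=
  if in_window nu A m then exp (lam * quad_dev nu m) else 0.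

Lemma window_exp_nonneg nu A lam m : 0 <= window_exp nu A lam m.
Proof. unfold window_exp. destruct in_window; [left; apply exp_pos | lra]. Qed.

Lemma trunc_expect_window_exp_le nu A lam N :
  0 < nu -> 1 <= A -> 0 <= lam -> lam * A ^ 2 <= 16/10 ->
  trunc_expect (window_exp nu A lam) nu N <= 1 + 2 * (249/100) * lam ^ 2 * nu ^ 2.
Proof.
  intros Hnu HA Hlam HlamA.
  (* Truncating beyond the window gives the boundary terms of the two moment identities the
     right sign. *)
  destruct (INR_unbounded (nu + A + INR N)) as [N' HN'].
  assert (HNN' : (N <= N')%nat) by (apply INR_le; generalize (pos_INR N); lra).
  assert (HN'big : nu + A <= INR N') by (generalize (pos_INR N); lra).
  eapply Rle_trans; [apply trunc_expect_mono; [lra | apply window_exp_nonneg | exact HNN']|].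
  set (ind := fun m => if in_window nu A m then 1 else 0).
  assert (Hpt : forall m, window_exp nu A lam m
     <= ind m + lam * (ind m * quad_dev nu m) + 249/100 * lam ^ 2 * quad_dev nu m ^ 2).
  { intros m. unfold window_exp, ind. destruct in_window eqn:Hm.
    - assert (quad_dev nu m < A ^ 2) by (apply quad_dev_lt; auto).
      eapply Rle_trans; [apply exp_le_quadratic; nra | right; ring].
    - generalize (pow2_ge_0 lam) (pow2_ge_0 (quad_dev nu m)). nra. }
  eapply Rle_trans; [apply trunc_expect_le; [lra | exact Hpt]|].
  rewrite !trunc_expect_add, !trunc_expect_scal.
  assert (trunc_expect ind nu N' <= 1).
  { eapply Rle_trans; [| apply (trunc_expect_one_le nu ltac:(lra) N')].
    apply trunc_expect_le; [lra|]. intros m; unfold ind; destruct in_window; lra. }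
  generalize (trunc_expect_window_quad_dev_le nu Hnu A N' HA ltac:(lra))
    (trunc_expect_quad_dev_sq_le nu Hnu N' ltac:(lra)) (pow2_ge_0 lam).
  unfold ind in *. nra.
Qed.

Definition box_expect (p : nat) (nu : nat -> R) (N : nat) (g : list nat -> R) : R :=
  sumR (map (fun k => g k * joint_pmf p nu k) (box p N)).

Definition stat_tail (p : nat) (nu : nat -> R) (t : R) (N : nat) : R :=
  sumR (map (fun k => if Rle_dec t (stat p nu k) then joint_pmf p nu k else 0) (box p N)).

Lemma stat_eq_sumR_quad_dev p nu k :
  stat p nu k = sumR (map (fun j => quad_dev (nu j) (nth j k 0%nat)) (seq 0 p)).
Proof. unfold stat. rewrite <- sumR_map_sub. reflexivity. Qed.

Lemma dev_indicator_sum_lt_1 (nu : nat -> R) s k l :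
  sumR (map (fun j => dev_indicator (nu j) s (nth j k 0%nat)) l) < 1 ->
  forall j, In j l -> Rabs (INR (nth j k 0%nat) - nu j) < s.
Proof.
  intros H j Hj. apply dev_indicator_lt_1.
  eapply Rle_lt_trans; [| exact H].
  apply (sumR_map_elem_le (fun j => dev_indicator (nu j) s (nth j k 0%nat))); auto.
  intros; apply dev_indicator_nonneg.
Qed.

Section BoxExpect.
Variable p : nat.
Variable nu : nat -> R.
Hypothesis nu_gt0 : forall j, (j < p)%nat -> 0 < nu j.

Lemma joint_pmf_nonneg k : 0 <= joint_pmf p nu k.
Proof.
  apply prodR_map_nonneg. intros j Hj. apply in_seq in Hj.
  apply poisson_pmf_nonneg. left; apply nu_gt0; lia.
Qed.

Lemma box_expect_add N g1 g2 :
  box_expect p nu N (fun k => g1 k + g2 k) = box_expect p nu N g1 + box_expect p nu N g2.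
Proof. unfold box_expect. rewrite <- sumR_map_add. apply sumR_map_ext; intros; ring. Qed.

Lemma box_expect_scal N a g : box_expect p nu N (fun k => a * g k) = a * box_expect p nu N g.
Proof. unfold box_expect. rewrite <- sumR_map_scal. apply sumR_map_ext; intros; ring. Qed.

Lemma box_expect_sumR N (h : nat -> list nat -> R) l :
  box_expect p nu N (fun k => sumR (map (fun j => h j k) l))
  = sumR (map (fun j => box_expect p nu N (h j)) l).
Proof.
  induction l as [|a l IH]; simpl.
  - unfold box_expect. rewrite sumR_map_scal. ring.
  - rewrite box_expect_add, IH. reflexivity.
Qed.

Lemma box_expect_prod N (f : nat -> nat -> R) :
  box_expect p nu N (fun k => prodR (map (fun j => f j (nth j k 0%nat)) (seq 0 p)))
  = prodR (map (fun j => trunc_expect (f j) (nu j) N) (seq 0 p)).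
Proof.
  unfold box_expect, joint_pmf, trunc_expect.
  rewrite <- (sumR_box_prod p N (fun j m => f j m * poisson_pmf (nu j) m)).
  apply sumR_map_ext. intros k _. rewrite <- prodR_map_mult. reflexivity.
Qed.

Lemma box_expect_coord_le N (h : nat -> R) j : (j < p)%nat -> (forall m, 0 <= h m) ->
  box_expect p nu N (fun k => h (nth j k 0%nat)) <= trunc_expect h (nu j) N.
Proof.
  intros Hj Hh.
  set (f := fun i => if Nat.eqb i j then h else fun _ : nat => 1).
  assert (Hf : forall k, h (nth j k 0%nat) = prodR (map (fun i => f i (nth i k 0%nat)) (seq 0 p))).
  { intros k. rewrite <- (prodR_map_indicator_on j (h (nth j k 0%nat)) p 0) by lia.
    f_equal. apply map_ext. intros i. unfold f. destruct (Nat.eqb_spec i j) as [->|]; auto. }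
  transitivity (box_expect p nu N (fun k => prodR (map (fun i => f i (nth i k 0%nat)) (seq 0 p)))).
  { right. apply sumR_map_ext. intros k _. rewrite Hf. reflexivity. }
  rewrite box_expect_prod.
  rewrite <- (prodR_map_indicator_on j (trunc_expect h (nu j) N) p 0) by lia.
  apply prodR_map_le. intros i Hi. apply in_seq in Hi.
  assert (Hnu : 0 <= nu i) by (left; apply nu_gt0; lia).
  unfold f. destruct (Nat.eqb_spec i j) as [->|]; split.
  - apply trunc_expect_nonneg; auto.
  - lra.
  - apply trunc_expect_nonneg; auto. intros; lra.
  - apply trunc_expect_one_le; auto.
Qed.

Lemma box_expect_coord_sum_le N (h : nat -> nat -> R) : (forall j m, 0 <= h j m) ->
  box_expect p nu N (fun k => sumR (map (fun j => h j (nth j k 0%nat)) (seq 0 p)))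
  <= sumR (map (fun j => trunc_expect (h j) (nu j) N) (seq 0 p)).
Proof.
  intros Hh. rewrite box_expect_sumR. apply sumR_map_le. intros j Hj.
  apply in_seq in Hj. apply box_expect_coord_le; [lia | auto].
Qed.

Lemma stat_tail_le_box_expect N t (g : list nat -> R) :
  (forall k, 0 <= g k) -> (forall k, t <= stat p nu k -> 1 <= g k) ->
  stat_tail p nu t N <= box_expect p nu N g.
Proof.
  intros Hg0 Hg1. apply sumR_map_le. intros k _.
  generalize (joint_pmf_nonneg k) (Hg0 k).
  destruct Rle_dec as [Ht|]; [generalize (Hg1 k Ht) |]; nra.
Qed.

Lemma stat_tail_le_1 N t : stat_tail p nu t N <= 1.
Proof.
  eapply Rle_trans; [apply (stat_tail_le_box_expect N t (fun _ => 1)); intros; lra|].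
  transitivity (prodR (map (fun j => trunc_expect (fun _ => 1) (nu j) N) (seq 0 p))).
  { right. rewrite <- (box_expect_prod N (fun _ _ => 1)). apply sumR_map_ext. intros k _.
    cbv beta. rewrite prodR_map_const, pow1. reflexivity. }
  eapply Rle_trans; [apply (prodR_map_le _ (fun _ => 1)) | rewrite prodR_map_const, pow1; lra].
  intros j Hj. apply in_seq in Hj.
  assert (0 <= nu j) by (left; apply nu_gt0; lia).
  split; [apply trunc_expect_nonneg; auto; intros; lra | apply trunc_expect_one_le; auto].
Qed.

Lemma stat_tail_le_dev_tails N s t : (1 <= p)%nat -> INR p * s ^ 2 <= t ->
  stat_tail p nu t N
  <= sumR (map (fun j => trunc_expect (dev_indicator (nu j) s) (nu j) N) (seq 0 p)).
Proof.
  intros Hp Hst.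
  set (g := fun k => sumR (map (fun j => dev_indicator (nu j) s (nth j k 0%nat)) (seq 0 p))).
  eapply Rle_trans; [apply (stat_tail_le_box_expect N t g)|].
  - intros k. apply sumR_map_nonneg. intros; apply dev_indicator_nonneg.
  - intros k Hk. destruct (Rlt_dec (g k) 1) as [Hlt|]; [exfalso | lra].
    assert (Hsum : stat p nu k < INR (length (seq 0 p)) * s ^ 2).
    { rewrite stat_eq_sumR_quad_dev. apply sumR_map_lt_const.
      - destruct p; [lia | discriminate].
      - intros j Hj. apply quad_dev_lt. unfold in_window.
        destruct Rlt_dec as [|Hn]; [reflexivity | contradict Hn].
        apply (dev_indicator_sum_lt_1 nu s k (seq 0 p)); auto. }
    rewrite length_seq in Hsum. lra.
  - apply (box_expect_coord_sum_le N (fun j => dev_indicator (nu j) s)).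
    intros; apply dev_indicator_nonneg.
Qed.

Lemma stat_tail_le_window_exp N A lam t : 0 <= lam ->
  stat_tail p nu t N
  <= sumR (map (fun j => trunc_expect (dev_indicator (nu j) A) (nu j) N) (seq 0 p))
     + exp (- lam * t) * prodR (map (fun j => trunc_expect (window_exp (nu j) A lam) (nu j) N) (seq 0 p)).
Proof.
  intros Hlam.
  set (tails := fun k => sumR (map (fun j => dev_indicator (nu j) A (nth j k 0%nat)) (seq 0 p))).
  set (mgf := fun k => prodR (map (fun j => window_exp (nu j) A lam (nth j k 0%nat)) (seq 0 p))).
  assert (Htails : forall k, 0 <= tails k)
    by (intros k; apply sumR_map_nonneg; intros; apply dev_indicator_nonneg).
  assert (Hmgf : forall k, 0 <= mgf k)
    by (intros k; apply prodR_map_nonneg; intros; apply window_exp_nonneg).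
  assert (Hexp := exp_pos (- lam * t)).
  eapply Rle_trans; [apply (stat_tail_le_box_expect N t (fun k => tails k + exp (- lam * t) * mgf k))|].
  - intros k. generalize (Htails k) (Hmgf k). nra.
  - intros k Hk. generalize (Htails k) (Hmgf k).
    destruct (Rlt_dec (tails k) 1) as [Hlt|]; [intros Ht0 _ | nra].
    assert (Hin : mgf k = exp (lam * stat p nu k)).
    { unfold mgf. rewrite stat_eq_sumR_quad_dev, <- sumR_map_scal, exp_sumR_map.
      f_equal. apply map_ext_in. intros j Hj. unfold window_exp, in_window.
      destruct Rlt_dec as [|Hn]; [reflexivity | contradict Hn].
      apply (dev_indicator_sum_lt_1 nu A k (seq 0 p)); auto. }
    rewrite Hin, <- exp_plus.
    assert (1 <= exp (- lam * t + lam * stat p nu k)) by (rewrite <- exp_0; apply exp_le; nra).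
    lra.
  - rewrite box_expect_add, box_expect_scal. unfold mgf.
    rewrite (box_expect_prod N (fun j => window_exp (nu j) A lam)).
    apply Rplus_le_compat_r, (box_expect_coord_sum_le N (fun j => dev_indicator (nu j) A)).
    intros; apply dev_indicator_nonneg.
Qed.

End BoxExpect.

Lemma sumR_map_le_const {A} (f : A -> R) (a : R) l :
  (forall x, In x l -> f x <= a) -> sumR (map f l) <= INR (length l) * a.
Proof. intros H. rewrite <- sumR_map_const. apply sumR_map_le. auto. Qed.

Lemma quadratic_le_half_linear a b lam : 0 < b -> 0 <= lam <= a / (2 * b) ->
  - lam * a + b * lam ^ 2 <= - lam * a / 2.
Proof.
  intros Hb [H0 H1].
  apply (Rmult_le_compat_l (2 * b)) in H1; [| lra].
  replace (2 * b * (a / (2 * b))) with a in H1 by (field; lra).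
  assert (lam * (2 * b * lam) <= lam * a) by (apply Rmult_le_compat_l; auto).
  simpl. lra.
Qed.

Lemma Rdiv_in_0_1 w r : 0 < w <= r -> 0 < w / r <= 1.
Proof.
  intros Hw. split; [apply Rdiv_lt_0_compat; lra|].
  apply (Rmult_le_reg_r r); [lra|]. unfold Rdiv. rewrite Rmult_assoc, Rinv_l; lra.
Qed.

Lemma dev_tail_exponent_le r w kappa sigma c : 0 < w <= r -> 0 <= kappa <= 1 ->
  kappa ^ 2 / 2 + kappa ^ 3 / 6 + kappa ^ 4 / 24 + kappa ^ 5 / 40 - kappa * sigma + c <= 0 ->
  let th := kappa * (w / r) in
  r ^ 2 * (th ^ 2 / 2 + th ^ 3 / 6 + th ^ 4 / 24 + th ^ 5 / 40) - th * (sigma * w * r)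
  <= - c * w ^ 2.
Proof.
  intros [Hw Hwr] Hk Hpoly th.
  assert (Hv : 0 < w / r <= 1) by (apply Rdiv_in_0_1; lra).
  assert (Hwv : w = w / r * r) by (field; lra).
  unfold th. set (v := w / r) in *. clearbody v. subst w.
  replace (r ^ 2 * ((kappa * v) ^ 2 / 2 + (kappa * v) ^ 3 / 6 + (kappa * v) ^ 4 / 24
             + (kappa * v) ^ 5 / 40) - kappa * v * (sigma * (v * r) * r))
    with ((v * r) ^ 2 * (kappa ^ 2 / 2 + kappa ^ 3 * v / 6 + kappa ^ 4 * v ^ 2 / 24
             + kappa ^ 5 * v ^ 3 / 40 - kappa * sigma)) by field.
  replace (- c * (v * r) ^ 2) with ((v * r) ^ 2 * (- c)) by ring.
  apply Rmult_le_compat_l; [apply pow2_ge_0|].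
  assert (v ^ 2 <= 1) by (rewrite <- (pow1 2); apply pow_incr; lra).
  assert (v ^ 3 <= 1) by (rewrite <- (pow1 3); apply pow_incr; lra).
  generalize (pow_le kappa 3 (proj1 Hk)) (pow_le kappa 4 (proj1 Hk)) (pow_le kappa 5 (proj1 Hk)).
  nra.
Qed.

Section StatTail.
Variable p : nat.
Variable nu : nat -> R.
Variables V r w c : R.
Hypothesis p_ge1 : (1 <= p)%nat.
Hypothesis nu_bounds : forall j, (j < p)%nat -> 0 < nu j <= V.
Hypothesis r_sq : r ^ 2 = V.
Hypothesis w_bounds : 0 < w <= r.
Hypothesis c_bounds : 0 < c <= 3816/10000.

Let P := sqrt (INR p).

Let nu_gt0 j : (j < p)%nat -> 0 < nu j.
Proof. intros Hj. apply nu_bounds, Hj. Qed.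

Let P_sq : P ^ 2 = INR p.
Proof. apply pow2_sqrt, pos_INR. Qed.

Let P_ge1 : 1 <= P.
Proof. rewrite <- sqrt_1. apply sqrt_le_1_alt, (le_INR 1), p_ge1. Qed.

Lemma dev_tails_le kappa sigma N :
  0 <= kappa <= 1 ->
  kappa ^ 2 / 2 + kappa ^ 3 / 6 + kappa ^ 4 / 24 + kappa ^ 5 / 40 - kappa * sigma + c <= 0 ->
  sumR (map (fun j => trunc_expect (dev_indicator (nu j) (sigma * w * r)) (nu j) N) (seq 0 p))
  <= 2 * INR p * exp (- c * w ^ 2).
Proof.
  intros Hk Hpoly.
  eapply Rle_trans; [apply (sumR_map_le_const _ (2 * exp (- c * w ^ 2))) | rewrite length_seq; lra].
  intros j Hj. apply in_seq in Hj.
  apply (trunc_expect_dev_indicator_le _ V _ _ (kappa * (w / r))).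
  - apply nu_bounds. lia.
  - assert (0 < w / r <= 1) by (apply Rdiv_in_0_1; auto).
    split; [apply Rmult_le_pos |]; nra.
  - rewrite <- r_sq. apply dev_tail_exponent_le; auto.
Qed.

Lemma stat_tail_small_p N : P <= 9/16 * w ->
  stat_tail p nu (V * P * w ^ 3) N <= 2 * INR p * exp (- c * w ^ 2).
Proof.
  intros HP.
  eapply Rle_trans; [apply (stat_tail_le_dev_tails p nu nu_gt0 N (4/3 * w * r)); auto|].
  - rewrite <- P_sq, <- r_sq.
    assert (0 <= P * w ^ 2 * r ^ 2)
      by (assert (HP1 := P_ge1); repeat apply Rmult_le_pos; try apply pow2_ge_0; lra).
    replace (P ^ 2 * (4/3 * w * r) ^ 2) with ((P * w ^ 2 * r ^ 2) * (16/9 * P)) by field.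
    replace (r ^ 2 * P * w ^ 3) with ((P * w ^ 2 * r ^ 2) * w) by ring.
    apply Rmult_le_compat_l; lra.
  - apply (dev_tails_le 1); [lra | simpl; lra].
Qed.

Lemma prodR_window_exp_le A lam N : 1 <= A -> 0 <= lam -> lam * A ^ 2 <= 16/10 ->
  prodR (map (fun j => trunc_expect (window_exp (nu j) A lam) (nu j) N) (seq 0 p))
  <= exp (2 * (249/100) * lam ^ 2 * V ^ 2 * INR p).
Proof.
  intros HA Hlam HlamA.
  eapply Rle_trans; [apply (prodR_map_le _ (fun _ => exp (2 * (249/100) * lam ^ 2 * V ^ 2)))|].
  2: { rewrite prodR_map_const, length_seq, exp_INR_mult. lra. }
  intros j Hj. apply in_seq in Hj.
  destruct (nu_bounds j ltac:(lia)) as [Hnu HnuV].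
  split; [apply trunc_expect_nonneg; [lra | apply window_exp_nonneg]|].
  eapply Rle_trans; [apply trunc_expect_window_exp_le; auto|].
  eapply Rle_trans; [| apply exp_ineq1_le].
  assert (nu j ^ 2 <= V ^ 2) by (apply pow_incr; lra).
  generalize (pow2_ge_0 lam). nra.
Qed.

(* This is where the size of c matters: c^3 <= 1.06^2 / (8 * 2.49). *)
Lemma c_w2_le_pow6 : 106/100 <= c * w ^ 2 -> c * w ^ 2 <= w ^ 6 / (8 * (249/100)).
Proof.
  intros Hcw.
  assert (c ^ 2 * (8 * (249/100) * c) <= c ^ 2 * w ^ 4).
  { assert (c ^ 2 <= (3816/10000) ^ 2) by (apply pow_incr; lra).
    assert ((106/100) ^ 2 <= (c * w ^ 2) ^ 2) by (apply pow_incr; lra).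
    simpl in *. nra. }
  assert (8 * (249/100) * c <= w ^ 4)
    by (apply (Rmult_le_reg_l (c ^ 2)); [apply pow_lt; lra | lra]).
  assert (0 <= w ^ 2) by apply pow2_ge_0.
  replace (w ^ 6) with (w ^ 2 * w ^ 4) by ring.
  apply (Rmult_le_reg_r (8 * (249/100))); [lra|]. field_simplify. nra.
Qed.

Lemma window_radius_ge1 : 106/100 <= c * w ^ 2 -> 1 <= 21/20 * w * r.
Proof.
  intros Hcw.
  assert (c * w ^ 2 <= 3816/10000 * w ^ 2) by (apply Rmult_le_compat_r; [apply pow2_ge_0 | lra]).
  assert (w * w <= w * r) by (apply Rmult_le_compat_l; lra).
  simpl in *. lra.
Qed.

Lemma exp_markov_parameter : 9/16 * w <= P -> 106/100 <= c * w ^ 2 ->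
  exists lam, 0 <= lam /\ lam * (21/20 * w * r) ^ 2 <= 16/10 /\
    - lam * (V * P * w ^ 3) + 2 * (249/100) * lam ^ 2 * V ^ 2 * INR p <= - c * w ^ 2.
Proof.
  intros HPw Hcw.
  assert (HP := P_ge1).
  assert (HV : 0 < V) by (rewrite <- r_sq; apply pow_lt; lra).
  set (A := 21/20 * w * r).
  set (a := V * P * w ^ 3). set (b := 2 * (249/100) * V ^ 2 * P ^ 2).
  assert (Ha : 0 < a) by (unfold a; repeat apply Rmult_lt_0_compat; try apply pow_lt; lra).
  assert (Hb : 0 < b) by (unfold b; repeat apply Rmult_lt_0_compat; try apply pow_lt; lra).
  assert (HA0 : 0 < A) by (unfold A; nra).
  assert (HA2 : 0 < A ^ 2) by (apply pow_lt; lra).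
  (* The minimiser [a / (2 b)] of [- lam * a + b * lam ^ 2], capped by [lam * A ^ 2 <= 16/10]. *)
  set (lam := Rmin (a / (2 * b)) (16/10 / A ^ 2)).
  assert (Hlam : 0 <= lam <= a / (2 * b)).
  { split; [apply Rmin_case; left; apply Rdiv_lt_0_compat; lra | apply Rmin_l]. }
  assert (Hgain : c * w ^ 2 <= lam * a / 2).
  { unfold lam. apply Rmin_case.
    - replace (a / (2 * b) * a / 2) with (w ^ 6 / (8 * (249/100))).
      + apply c_w2_le_pow6, Hcw.
      + unfold a, b. field. split; lra.
    - replace (16/10 / A ^ 2 * a / 2) with (16/10 * (400/441) / 2 * (P * w)).
      + nra.
      + unfold a, A. rewrite <- r_sq. field. lra. }
  assert (HlamA : lam * A ^ 2 <= 16/10).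
  { apply (Rle_trans _ (16/10 / A ^ 2 * A ^ 2)); [apply Rmult_le_compat_r; [lra | apply Rmin_r]|].
    right. field. lra. }
  assert (Hexponent : - lam * a + b * lam ^ 2 <= - c * w ^ 2)
    by (generalize (quadratic_le_half_linear a b lam Hb Hlam); lra).
  exists lam. split; [lra | split; [exact HlamA|]].
  replace (2 * (249/100) * lam ^ 2 * V ^ 2 * INR p) with (b * lam ^ 2)
    by (unfold b; rewrite <- P_sq; ring).
  exact Hexponent.
Qed.

Lemma stat_tail_large_p N : 9/16 * w <= P -> 106/100 <= c * w ^ 2 ->
  stat_tail p nu (V * P * w ^ 3) N <= (2 * INR p + 1) * exp (- c * w ^ 2).
Proof.
  intros HPw Hcw.
  destruct (exp_markov_parameter HPw Hcw) as [lam [Hlam [HlamA Hexponent]]].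
  eapply Rle_trans; [apply (stat_tail_le_window_exp p nu nu_gt0 N (21/20 * w * r) lam _ Hlam)|].
  assert (Htails := dev_tails_le (4/5) (21/20) N ltac:(lra) ltac:(simpl; lra)).
  assert (Hmgf := prodR_window_exp_le _ lam N (window_radius_ge1 Hcw) Hlam HlamA).
  apply (Rmult_le_compat_l (exp (- lam * (V * P * w ^ 3)))) in Hmgf; [| left; apply exp_pos].
  rewrite <- exp_plus in Hmgf.
  generalize (exp_le _ _ Hexponent). lra.
Qed.

Lemma stat_tail_trivial N t : c * w ^ 2 < 106/100 ->
  stat_tail p nu t N <= (2 * INR p + 1) * exp (- c * w ^ 2).
Proof.
  intros Hcw.
  assert (1 <= 3 * exp (- c * w ^ 2)).
  { rewrite <- (Rinv_r (exp (c * w ^ 2))) by (apply Rgt_not_eq, exp_pos).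
    replace (- c * w ^ 2) with (- (c * w ^ 2)) by ring. rewrite exp_Ropp.
    apply Rmult_le_compat_r; [left; apply Rinv_0_lt_compat, exp_pos|].
    apply (Rle_trans _ _ _ (exp_le _ _ (Rlt_le _ _ Hcw))), exp_1_06_le. }
  assert (H1p : 1 <= INR p) by apply (le_INR 1 p p_ge1).
  assert (3 * exp (- c * w ^ 2) <= (2 * INR p + 1) * exp (- c * w ^ 2))
    by (apply Rmult_le_compat_r; [left; apply exp_pos | lra]).
  generalize (stat_tail_le_1 p nu nu_gt0 N t). lra.
Qed.

Lemma stat_tail_le N : stat_tail p nu (V * P * w ^ 3) N <= (2 * INR p + 1) * exp (- c * w ^ 2).
Proof.
  destruct (Rlt_dec (c * w ^ 2) (106/100)) as [Hsmall|Hbig]; [apply stat_tail_trivial, Hsmall|].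
  destruct (Rle_dec P (9/16 * w)) as [HP|HP].
  - eapply Rle_trans; [apply stat_tail_small_p, HP|]. generalize (exp_pos (- c * w ^ 2)). lra.
  - apply stat_tail_large_p; lra.
Qed.

End StatTail.

Lemma fold_right_Rmax_ge l x : In x l -> x <= fold_right Rmax 0 l.
Proof.
  induction l as [|a l IH]; simpl; intros H; [contradiction|].
  destruct H as [<-|H]; [apply Rmax_l | eapply Rle_trans; [apply IH, H | apply Rmax_r]].
Qed.

Lemma nu_le_nu_inf p nu j : (j < p)%nat -> nu j <= nu_inf p nu.
Proof. intros Hj. apply fold_right_Rmax_ge, in_map, in_seq. lia. Qed.

Lemma Rpower_pos x y : 0 < Rpower x y.
Proof. apply exp_pos. Qed.

Lemma Rpower_pow_nat x y n : 0 < x -> Rpower x y ^ n = Rpower x (y * INR n).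
Proof. intros Hx. rewrite <- Rpower_pow by apply Rpower_pos. apply Rpower_mult. Qed.

Lemma Rpower_third_cube x : 0 < x -> Rpower x (1/3) ^ 3 = x.
Proof.
  intros Hx. rewrite Rpower_pow_nat by exact Hx.
  replace (1/3 * INR 3) with 1 by (simpl; field). apply Rpower_1, Hx.
Qed.

Lemma le_base_of_pow_lt a b n : 0 <= b -> a ^ n < b ^ n -> a <= b.
Proof.
  intros Hb H. destruct (Rle_dec a b) as [|Hab]; [assumption|].
  assert (b ^ n <= a ^ n) by (apply pow_incr; lra). lra.
Qed.

Lemma cbrt_12_div_6_bounds : 0 < Rpower 12 (1/3) / 6 <= 3816/10000.
Proof.
  assert (Rpower 12 (1/3) <= 22896/10000).
  { apply (le_base_of_pow_lt _ _ 3); [lra|]. rewrite Rpower_third_cube by lra. simpl. lra. }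
  generalize (Rpower_pos 12 (1/3)). lra.
Qed.

Theorem lemma2p2 (p : nat) (nu : nat -> R) (u : R)
  (hp : (1 <= p)%nat)
  (hnu : forall j, (j < p)%nat -> 0 < nu j)
  (hu1 : Rpower (nu_inf p nu) (- (3 / 2)) <= u)
  (hu2 : u <= 9 / 10 * Rpower (nu_inf p nu) (3 / 2)) :
  let t := nu_inf p nu * sqrt (INR p) * u in
  let c := Rpower 12 (1 / 3) / 6 in
  prob_le p nu (fun k => t <= stat p nu k) (stat_ge_dec p nu t)
    ((2 * INR p + 1) * exp (- c * Rpower u (2 / 3))).
Proof.
  intros t c N. change (stat_tail p nu t N <= (2 * INR p + 1) * exp (- c * Rpower u (2/3))).
  set (V := nu_inf p nu) in *.
  assert (HnuV : forall j, (j < p)%nat -> 0 < nu j <= V)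
    by (intros j Hj; split; [apply hnu, Hj | apply nu_le_nu_inf, Hj]).
  assert (HV : 0 < V) by (destruct (HnuV 0%nat) as [h0 h1]; [lia | lra]).
  (* The lower bound on [u] is only needed for [0 < u]; small [u] are covered by the trivial bound. *)
  assert (Hu : 0 < u) by (eapply Rlt_le_trans; [apply Rpower_pos | exact hu1]).
  set (r := sqrt V). set (w := Rpower u (1/3)).
  assert (Hr : 0 < r) by (apply sqrt_lt_R0, HV).
  assert (Hw3 : w ^ 3 = u) by (apply Rpower_third_cube, Hu).
  assert (Hr3 : Rpower V (3/2) = r ^ 3).
  { unfold r. rewrite <- Rpower_sqrt, Rpower_pow_nat by (auto; apply Rpower_pos).
    f_equal. simpl. field. }
  assert (Hwr : w <= r).
  { apply (le_base_of_pow_lt _ _ 3); [lra|]. generalize (pow_lt r 3 Hr). lra. }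
  replace (Rpower u (2/3)) with (w ^ 2) by (unfold w; rewrite Rpower_pow_nat by exact Hu; f_equal; simpl; field).
  unfold t. rewrite <- Hw3.
  apply (stat_tail_le p nu V r w c); auto.
  - apply pow2_sqrt. lra.
  - split; [apply Rpower_pos | exact Hwr].
  - apply cbrt_12_div_6_bounds.
Qed.
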